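(* Let $G$ be a group, $\mathcal F\subset\mathcal P_G$ a left-invariant lower family, $A\subset G$, and $\alpha$ an ordinal. Then $A\in\tau^\alpha(\mathcal F)$ if and only if the $\tau$-tree $T_A$ is well-founded and $\mathrm{rank}(T_A)\le\alpha$ when $\alpha<\omega$, respectively $\mathrm{rank}(T_A)\le\alpha+1$ when $\alpha\ge\omega$.
   Context: $e$ is the neutral element of $G$, $G_\circ=G\setminus\{e\}$. $G_\circ^{<\omega}=\bigcup_{n\in\omega}G_\circ^n$ is the tree of finite sequences, ordered by $s\le t$ iff $s$ is an initial segment of $t$; for $s\in G_\circ^{<\omega}$ and $x\in G_\circ$, $s\hat{\ }x$ is the sequence $s$ extended by $x$. For $A\subset G$ define $A_\emptyset=A$ and $A_{s\hat{\ }x}=A_s\cap xA_s$; thus $A_{(g_0,\dots,g_n)}=\bigcap_{k_0,\dots,k_n\in\{0,1\}}g_n^{k_n}\cdots g_0^{k_0}A$. The $\tau$-tree of $A$ is $T_A=\{s\in G_\circ^{<\omega}: A_s\notin\mathcal F\}$ (a lower subtree). A poset $X$ is well-founded if every nonempty subset has a maximal element; then $\mathrm{rank}_X(x)=\sup\{\mathrm{rank}_X(y)+1: y>x\}$ ($\sup\emptyset=0$), and $\mathrm{rank}(X)=\sup\{\mathrm{rank}_X(x)+1:x\in X\}$ for $X\neq\emptyset$, $\mathrm{rank}(\emptyset)=0$. For a left-invariant lower $\mathcal F$ ($xF\in\mathcal F$ for $F\in\mathcal F$, $x\in G$; closed under subsets): $\tau(\mathcal F)=\{A: xA\cap yA\in\mathcal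 F$ for all distinct $x,y\in G\}$, $\tau^0(\mathcal F)=\mathcal F$, $\tau^{<\alpha}(\mathcal F)=\bigcup_{\beta<\alpha}\tau^\beta(\mathcal F)$, $\tau^\alpha(\mathcal F)=\tau(\tau^{<\alpha}(\mathcal F))$ for $\alpha>0$. *)

From Stdlib Require Import List.
Import ListNotations.
Set Implicit Arguments.

Record group := Group {
  carrier :> Type;
  gmul : carrier -> carrier -> carrier;
  gone : carrier;
  ginv : carrier -> carrier;
  gmulA : forall x y z, gmul x (gmul y z) = gmul (gmul x y) z;
  gmul1 : forall x, gmul gone x = x;
  gmulV : forall x, gmul (ginv x) x = gone
}.

Definition gset (G : group) := G -> Prop.
Definition family (G : group) := gset G -> Prop.

(** Left translate xA = { x a : a in A }. *)
Definition translate (G : group) (x : G) (A : gset G) : gset G :=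
  fun g => A (gmul G (ginv G x) g).

Definition inter (G : group) (A B : gset G) : gset G := fun g => A g /\ B g.

Definition subset (G : group) (A B : gset G) : Prop := forall g, A g -> B g.

Definition left_invariant (G : group) (F : family G) : Prop :=
  forall B x, F B -> F (translate x B).
Definition lower (G : group) (F : family G) : Prop :=
  forall B C, F B -> subset C B -> F C.

Definition tau (G : group) (H : family G) : family G :=
  fun A => forall x y : G, x <> y -> H (inter (translate x A) (translate y A)).

(** * Ordinals, represented as elements of well-ordered types *)
Record wellorder := WellOrder {
  ocarrier :> Type;
  olt : ocarrier -> ocarrier -> Prop;
  olt_wf : well_founded olt;
  olt_trans : forall a b c, olt a b -> olt b c -> olt a c;
  olt_total : forall a b, olt a b \/ a = b \/ olt b a
}.

(** alpha < omega : alpha has finitely many predecessors. *)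
Definition finite_ord (O : wellorder) (a : O) : Prop :=
  exists l : list O, forall b, olt O b a -> In b l.

(** Transfinite iteration: tau^0(F) = F,
    tau^a(F) = tau(tau^{<a}(F)) for a > 0, where tau^{<a}(F) = U_{b<a} tau^b(F).
    Defined as the (unique) solution of this well-founded recursion, written
    as an inductive predicate whose constructors are the unfolded equations. *)
Inductive tau_iter (G : group) (F : family G) (O : wellorder) : O -> gset G -> Prop :=
| tau_iter_zero : forall a A,
    (forall b, ~ olt O b a) -> F A -> tau_iter F O a A
| tau_iter_pos : forall a A,
    (exists b, olt O b a) ->
    (forall x y : G, x <> y ->
       exists b, olt O b a /\
         tau_iter F O b (inter (translate x A) (translate y A))) ->
    tau_iter F O a A.

(** A_s, with A_[] = A and A_{s^x} = A_s ∩ x A_s (s listed from g_0 on). *)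
Definition Aseq (G : group) (A : gset G) (s : list G) : gset G :=
  fold_left (fun B x => inter B (translate x B)) s A.

Definition tau_tree (G : group) (F : family G) (A : gset G) : list G -> Prop :=
  fun s => Forall (fun x => x <> gone G) s /\ ~ F (Aseq A s).

Definition prefix (T : Type) (s t : list T) : Prop := exists u, t = s ++ u.
Definition sprefix (T : Type) (s t : list T) : Prop := prefix s t /\ s <> t.

Definition wf_poset (T : Type) (X : list T -> Prop) : Prop :=
  forall S : list T -> Prop, (forall s, S s -> X s) -> (exists s, S s) ->
    exists m, S m /\ forall y, S y -> ~ sprefix m y.

(** rank_X(x) <= b, unfolding rank_X(x) = sup{ rank_X(y)+1 : y > x, y in X }:
    rank_X(x) <= b  iff  for all y > x in X, rank_X(y) < b, i.e.
    rank_X(y) <= c for some c < b. *)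
Inductive rank_le (T : Type) (X : list T -> Prop) (O : wellorder) : list T -> O -> Prop :=
| rank_le_intro : forall x b,
    (forall y, X y -> sprefix x y -> exists c, olt O c b /\ rank_le X O y c) ->
    rank_le X O x b.

(** rank(X) = sup{ rank_X(x)+1 : x in X } <= a  iff  rank_X(x) < a for all x. *)
Definition rank_poset_le (T : Type) (X : list T -> Prop) (O : wellorder) (a : O) : Prop :=
  forall x, X x -> exists c, olt O c a /\ rank_le X O x c.

(** rank(X) <= a+1  iff  rank_X(x) <= a for all x in X. *)
Definition rank_poset_le_succ (T : Type) (X : list T -> Prop) (O : wellorder) (a : O) : Prop :=
  forall x, X x -> rank_le X O x a.

From Stdlib Require Import List Classical.
Import ListNotations.

(* Left invariance reduces A ∈ τ(H) to A ∩ zA ∈ H for all z ≠ e, and the part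
   of T_A above its node (z) is the τ-tree T_{A ∩ zA}.  So A ∈ τ^α(F) iff each
   T_{A ∩ zA} obeys the rank bound for some β < α, which by induction on α is a
   bound on the ranks of the non-root nodes of T_A.  For finite α = n+1 only
   β = n matters and this says rank(T_A) ≤ α; for infinite α the β's need not
   have a largest one, so what survives is rank_{T_A}(root) ≤ α, that is
   rank(T_A) ≤ α+1. *)

Section GroupFacts.

Context {G : group}.

Lemma gmul_inv_r (x : G) : gmul G x (ginv G x) = gone G.
Proof.
  set (y := ginv G x).
  rewrite <- (gmul1 G (gmul G x y)), <- (gmulV G y) at 1.
  rewrite <- gmulA, (gmulA G y x y). unfold y at 2. rewrite gmulV, gmul1.
  apply gmulV.
Qed.

Lemma gmul_one_r (x : G) : gmul G x (gone G) = x.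
Proof. rewrite <- (gmulV G x), gmulA, gmul_inv_r, gmul1. reflexivity. Qed.

Lemma gmul_cancel_l (x y z : G) : gmul G x y = gmul G x z -> y = z.
Proof.
  intro E. rewrite <- (gmul1 G y), <- (gmul1 G z), <- (gmulV G x), <- !gmulA, E.
  reflexivity.
Qed.

Lemma ginv_mul (x y : G) : ginv G (gmul G x y) = gmul G (ginv G y) (ginv G x).
Proof.
  apply (gmul_cancel_l (gmul G x y)). rewrite gmul_inv_r.
  rewrite gmulA, <- (gmulA G x y (ginv G y)), gmul_inv_r, gmul_one_r, gmul_inv_r.
  reflexivity.
Qed.

Lemma ginv_one : ginv G (gone G) = gone G.
Proof. rewrite <- (gmul1 G (ginv G (gone G))). apply gmul_inv_r. Qed.

Lemma translate_one (A : gset G) g : translate (gone G) A g <-> A g.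
Proof. unfold translate. rewrite ginv_one, gmul1. tauto. Qed.

Lemma translate_translate (x w : G) (B : gset G) g :
  translate x (translate w B) g <-> translate (gmul G x w) B g.
Proof. unfold translate. rewrite ginv_mul, gmulA. tauto. Qed.

Lemma tau_iff_translates {H : family G} {A : gset G} :
  lower H -> left_invariant H ->
  tau H A <-> forall z, z <> gone G -> H (inter A (translate z A)).
Proof.
  intros Hlow Hinv. split.
  - intros HA z Hz. apply (Hlow _ _ (HA (gone G) z (fun e => Hz (eq_sym e)))).
    intros g [H1 H2]. split; [apply translate_one|]; assumption.
  - intros HA x y Hxy.
    assert (Hz : gmul G (ginv G x) y <> gone G).
    { intro E. apply Hxy.
      rewrite <- (gmul1 G y), <- (gmul_inv_r x), <- gmulA, E, gmul_one_r.
      reflexivity. }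
    apply (Hlow _ _ (Hinv _ x (HA _ Hz))).
    intros g [H1 H2]. unfold translate, inter in *. split; [assumption|].
    rewrite ginv_mul, <- gmulA, (gmulA G (ginv G (ginv G x)) (ginv G x) g),
      gmulV, gmul1.
    exact H2.
Qed.

End GroupFacts.

Definition tau_below {G : group} (F : family G) {O : wellorder} (a : O) : family G :=
  fun B => exists b, olt O b a /\ tau_iter F O b B.

Section TauIteration.

Context {G : group} {F : family G} {O : wellorder}.
Hypotheses (HFinv : left_invariant F) (HFlow : lower F).

Lemma tau_iter_lower (a : O) : lower (tau_iter F O a).
Proof.
  induction a as [a IH] using (well_founded_ind (olt_wf O)).
  intros B C HB HCB. destruct HB as [a B Ha HB | a B Ha HB].
  - apply tau_iter_zero; [exact Ha | exact (HFlow _ _ HB HCB)].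
  - apply tau_iter_pos; [exact Ha|]. intros x y Hxy.
    destruct (HB x y Hxy) as [c [Hc HBc]]. exists c. split; [exact Hc|].
    apply (IH c Hc _ _ HBc). intros g [H1 H2]. split; apply HCB; assumption.
Qed.

Lemma tau_iter_left_invariant (a : O) : left_invariant (tau_iter F O a).
Proof.
  induction a as [a IH] using (well_founded_ind (olt_wf O)).
  intros B w HB. destruct HB as [a B Ha HB | a B Ha HB].
  - apply tau_iter_zero; [exact Ha | exact (HFinv _ _ HB)].
  - apply tau_iter_pos; [exact Ha|]. intros x y Hxy.
    assert (Hne : gmul G x w <> gmul G y w).
    { intro E. apply Hxy.
      rewrite <- (gmul_one_r x), <- (gmul_one_r y), <- (gmul_inv_r w),
        !gmulA, E.
      reflexivity. }
    destruct (HB _ _ Hne) as [c [Hc HBc]]. exists c. split; [exact Hc|].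
    apply (tau_iter_lower c _ _ HBc).
    intros g [H1 H2]. split; apply translate_translate; assumption.
Qed.

Lemma tau_below_lower (a : O) : lower (tau_below F a).
Proof.
  intros B C [b [Hb HB]] HCB. exists b. split; [exact Hb|].
  exact (tau_iter_lower b _ _ HB HCB).
Qed.

Lemma tau_below_left_invariant (a : O) : left_invariant (tau_below F a).
Proof.
  intros B x [b [Hb HB]]. exists b. split; [exact Hb|].
  exact (tau_iter_left_invariant b _ _ HB).
Qed.

Lemma tau_iter_zero_iff (a : O) (A : gset G) :
  (forall b, ~ olt O b a) -> tau_iter F O a A <-> F A.
Proof.
  intro Ha. split.
  - intro H. inversion H as [? ? _ HA | ? ? [b Hb] _]; [exact HA | destruct (Ha b Hb)].
  - intro HA. apply tau_iter_zero; assumption.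
Qed.

Lemma tau_iter_pos_iff (a : O) (A : gset G) :
  (exists b, olt O b a) ->
  tau_iter F O a A <-> forall z, z <> gone G -> tau_below F a (Aseq A [z]).
Proof.
  intro Ha. transitivity (tau (tau_below F a) A).
  2: exact (tau_iff_translates (tau_below_lower a) (tau_below_left_invariant a)).
  split.
  - intro H. inversion H as [? ? Hzero _ | ? ? _ HA]; [|exact HA].
    destruct Ha as [b Hb]. destruct (Hzero b Hb).
  - intro HA. apply tau_iter_pos; assumption.
Qed.

End TauIteration.

Section RankOfPrefixOrder.

Context {T : Type} {X : list T -> Prop} {O : wellorder}.

Lemma sprefix_nil (y : list T) : y <> [] -> sprefix [] y.
Proof. intro Hy. split; [exists y; reflexivity | auto]. Qed.

Lemma sprefix_cons_inv {z : T} {s y} :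
  sprefix (z :: s) y -> exists y', y = z :: y' /\ sprefix s y'.
Proof.
  intros [[u ->] Hne]. exists (s ++ u). split; [reflexivity|].
  split; [exists u; reflexivity|]. intro E. apply Hne. simpl. rewrite <- E. reflexivity.
Qed.

Lemma sprefix_cons (z : T) {s y} : sprefix s y -> sprefix (z :: s) (z :: y).
Proof.
  intros [[u ->] Hne]. split; [exists u; reflexivity|].
  intro E. injection E. auto.
Qed.

Lemma rank_le_iff x b :
  rank_le X O x b <->
  (forall y, X y -> sprefix x y -> exists c, olt O c b /\ rank_le X O y c).
Proof. split; [intros [? ? H]; exact H | apply rank_le_intro]. Qed.

Lemma rank_le_weaken {x c b} : rank_le X O x c -> olt O c b -> rank_le X O x b.
Proof.
  rewrite !rank_le_iff. intros H Hcb y Hy Hxy.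
  destruct (H y Hy Hxy) as [d [Hd Hyd]]. exists d. split; [|exact Hyd].
  exact (olt_trans O _ _ _ Hd Hcb).
Qed.

Lemma rank_poset_le_of_succ {c b} :
  rank_poset_le_succ X O c -> olt O c b -> rank_poset_le X O b.
Proof. intros H Hc x Hx. exists c. split; [exact Hc | exact (H x Hx)]. Qed.

Lemma rank_poset_le_succ_weaken {c b} :
  rank_poset_le_succ X O c -> olt O c b -> rank_poset_le_succ X O b.
Proof. intros H Hc x Hx. exact (rank_le_weaken (H x Hx) Hc). Qed.

Lemma rank_poset_le_weaken {b n} :
  rank_poset_le X O b -> b = n \/ olt O b n -> rank_poset_le X O n.
Proof.
  intros H [<- | Hbn]; [exact H|]. intros x Hx. destruct (H x Hx) as [c [Hc Hxc]].
  exists c. split; [exact (olt_trans O _ _ _ Hc Hbn) | exact Hxc].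
Qed.

Lemma rank_poset_le_succ_of_root {c} :
  rank_le X O [] c -> rank_poset_le_succ X O c.
Proof.
  intros H [|a x] Hx; [exact H|].
  rewrite rank_le_iff in H.
  destruct (H (a :: x) Hx (sprefix_nil (a :: x) ltac:(discriminate))) as [d [Hd Hxd]].
  exact (rank_le_weaken Hxd Hd).
Qed.

Lemma wf_poset_of_rank :
  (forall x, X x -> exists c, rank_le X O x c) -> wf_poset X.
Proof.
  intros H S HSX [s0 Hs0].
  assert (Hmin : forall c s, S s -> rank_le X O s c ->
            exists m, S m /\ forall y, S y -> ~ sprefix m y).
  { intro c. induction c as [c IH] using (well_founded_ind (olt_wf O)).
    intros s Hs Hsc. apply NNPP. intro Hno. apply Hno. exists s. split; [exact Hs|].
    intros y Hy Hsy. rewrite rank_le_iff in Hsc.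
    destruct (Hsc y (HSX _ Hy) Hsy) as [d [Hd Hyd]].
    exact (Hno (IH d Hd y Hy Hyd)). }
  destruct (H s0 (HSX _ Hs0)) as [c Hc]. exact (Hmin c s0 Hs0 Hc).
Qed.

End RankOfPrefixOrder.

Section Ordinals.

Context {O : wellorder}.

Lemma finite_ord_lt {a b : O} : finite_ord O a -> olt O b a -> finite_ord O b.
Proof.
  intros [l Hl] Hba. exists l. intros c Hc. exact (Hl c (olt_trans O _ _ _ Hc Hba)).
Qed.

Lemma list_max {l : list O} {P : O -> Prop} :
  (exists x, P x) -> (forall x, P x -> In x l) ->
  exists m, P m /\ forall c, P c -> c = m \/ olt O c m.
Proof.
  revert P. induction l as [|a l IHl]; intros P [x Hx] Hin; [destruct (Hin x Hx)|].
  destruct (classic (exists x, P x /\ In x l)) as [Hl | Hnl].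
  - destruct (IHl (fun x => P x /\ In x l) Hl) as [m [[Pm _] Hm]];
      [intros y [_ Hy]; exact Hy|].
    assert (Hle : forall c, P c -> c <> a -> c = m \/ olt O c m).
    { intros c Pc Hca. apply Hm. split; [exact Pc|].
      destruct (Hin c Pc) as [E | Hc]; [congruence | exact Hc]. }
    destruct (classic (P a)) as [Pa | nPa].
    + destruct (olt_total O m a) as [Hma | [-> | Ham]].
      * exists a. split; [exact Pa|]. intros c Pc.
        destruct (classic (c = a)) as [-> | Hca]; [left; reflexivity|].
        right. destruct (Hle c Pc Hca) as [-> | Hcm]; [exact Hma|].
        exact (olt_trans O _ _ _ Hcm Hma).
      * exists a. split; [exact Pa|]. intros c Pc.
        destruct (classic (c = a)) as [-> | Hca]; [left; reflexivity|].
        exact (Hle c Pc Hca).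
      * exists m. split; [exact Pm|]. intros c Pc.
        destruct (classic (c = a)) as [-> | Hca]; [right; exact Ham|].
        exact (Hle c Pc Hca).
    + exists m. split; [exact Pm|]. intros c Pc.
      apply Hle; [exact Pc | intros ->; contradiction].
  - exists x. split; [exact Hx|]. intros c Pc. left.
    assert (Hsingle : forall y, P y -> y = a).
    { intros y Py. destruct (Hin y Py) as [-> | Hy]; [reflexivity|].
      exfalso. exact (Hnl (ex_intro _ y (conj Py Hy))). }
    rewrite (Hsingle c Pc), (Hsingle x Hx). reflexivity.
Qed.

Lemma finite_ord_max_pred {a : O} :
  finite_ord O a -> (exists b, olt O b a) ->
  exists n, olt O n a /\ forall c, olt O c a -> c = n \/ olt O c n.
Proof. intros [l Hl] Ha. exact (list_max Ha Hl). Qed.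

Lemma infinite_ord_pred {a : O} : ~ finite_ord O a -> exists b, olt O b a.
Proof.
  intro Ha. apply NNPP. intro Hno. apply Ha. exists [].
  intros b Hb. exact (Hno (ex_intro _ b Hb)).
Qed.

Lemma infinite_ord_succ_lt {c a : O} :
  finite_ord O c -> olt O c a -> ~ finite_ord O a -> exists b, olt O c b /\ olt O b a.
Proof.
  intros [l Hl] Hca Ha. apply NNPP. intro Hno. apply Ha. exists (c :: l).
  intros d Hd. destruct (olt_total O d c) as [Hdc | [-> | Hcd]].
  - right. exact (Hl d Hdc).
  - left. reflexivity.
  - exfalso. exact (Hno (ex_intro _ d (conj Hcd Hd))).
Qed.

End Ordinals.

Definition rank_bound {T : Type} (X : list T -> Prop) (O : wellorder) (a : O) : Prop :=
  (finite_ord O a -> rank_poset_le X O a) /\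
  (~ finite_ord O a -> rank_poset_le_succ X O a).

Section RankBound.

Context {T : Type} {X : list T -> Prop} {O : wellorder}.
Hypothesis X_rooted : forall {s}, X s -> X [].

Lemma rank_bound_has_rank a :
  rank_bound X O a -> forall x, X x -> exists c, rank_le X O x c.
Proof.
  intros [Hfin Hinf] x Hx. destruct (classic (finite_ord O a)) as [Ha | Ha].
  - destruct (Hfin Ha x Hx) as [c [_ Hxc]]. exists c. exact Hxc.
  - exists a. exact (Hinf Ha x Hx).
Qed.

Lemma rank_bound_zero a : (forall b, ~ olt O b a) -> rank_bound X O a <-> ~ X [].
Proof.
  intro Ha.
  assert (Hfin : finite_ord O a) by (exists []; intros b Hb; destruct (Ha b Hb)).
  split.
  - intros [H _] Hroot. destruct (H Hfin [] Hroot) as [c [Hc _]]. exact (Ha c Hc).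
  - intro Hroot. split; [|intro; contradiction].
    intros _ x Hx. destruct (Hroot (X_rooted Hx)).
Qed.

Section FiniteBound.

Context {a n : O}.
Hypotheses (Ha : finite_ord O a) (Hna : olt O n a)
  (Hmax : forall c, olt O c a -> c = n \/ olt O c n).

Lemma rank_bound_finite : rank_bound X O a <-> rank_poset_le_succ X O n.
Proof.
  split.
  - intros [H _] x Hx. destruct (H Ha x Hx) as [c [Hc Hxc]].
    destruct (Hmax c Hc) as [-> | Hcn]; [exact Hxc | exact (rank_le_weaken Hxc Hcn)].
  - intro H. split; [intros _ | intro; contradiction].
    exact (rank_poset_le_of_succ H Hna).
Qed.

Lemma rank_bound_below_finite :
  (exists b, olt O b a /\ rank_bound X O b) <-> rank_poset_le X O n.
Proof.
  split.
  - intros [b [Hb [H _]]].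
    exact (rank_poset_le_weaken (H (finite_ord_lt Ha Hb)) (Hmax b Hb)).
  - intro H. exists n. split; [exact Hna|].
    split; [intros _; exact H | intro Hn; destruct (Hn (finite_ord_lt Ha Hna))].
Qed.

End FiniteBound.

Lemma rank_bound_infinite a :
  ~ finite_ord O a -> rank_bound X O a <-> rank_poset_le_succ X O a.
Proof.
  intro Ha. split; [intros [_ H]; exact (H Ha)|].
  intro H. split; [intro; contradiction | intros _; exact H].
Qed.

Lemma rank_bound_below_infinite a :
  ~ finite_ord O a ->
  (exists b, olt O b a /\ rank_bound X O b) <-> rank_poset_le X O a.
Proof.
  intro Ha. split.
  - intros [b [Hb [Hfin Hinf]]]. destruct (classic (finite_ord O b)) as [Hb' | Hb'].
    + exact (rank_poset_le_weaken (Hfin Hb') (or_intror Hb)).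
    + exact (rank_poset_le_of_succ (Hinf Hb') Hb).
  - intro H. destruct (classic (X [])) as [Hroot | Hroot].
    + destruct (H [] Hroot) as [c [Hc Hrc]].
      apply rank_poset_le_succ_of_root in Hrc.
      destruct (classic (finite_ord O c)) as [Hc' | Hc'].
      * destruct (infinite_ord_succ_lt Hc' Hc Ha) as [b [Hcb Hba]].
        exists b. split; [exact Hba|]. split; intros _.
        -- exact (rank_poset_le_of_succ Hrc Hcb).
        -- exact (rank_poset_le_succ_weaken Hrc Hcb).
      * exists c. split; [exact Hc|]. split; [intro; contradiction | intros _; exact Hrc].
    + destruct (infinite_ord_pred Ha) as [b Hb]. exists b. split; [exact Hb|].
      split; intros _ x Hx; destruct (Hroot (X_rooted Hx)).
Qed.

End RankBound.

Section TauTree.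

Context {G : group} {F : family G} {O : wellorder}.
Hypothesis HFlow : lower F.

Lemma Aseq_subset (s : list G) : forall A : gset G, subset (Aseq A s) A.
Proof.
  induction s as [|a s IH]; intros A g Hg; [exact Hg|].
  exact (proj1 (IH (inter A (translate a A)) g Hg)).
Qed.

Lemma tau_tree_nil (A : gset G) : tau_tree F A [] <-> ~ F A.
Proof. split; [intros [_ H]; exact H | intro H; split; [constructor | exact H]]. Qed.

Lemma tau_tree_root {A : gset G} {s} : tau_tree F A s -> tau_tree F A [].
Proof.
  intros [_ Hs]. apply tau_tree_nil. intro HA. exact (Hs (HFlow _ _ HA (Aseq_subset s A))).
Qed.

Lemma tau_tree_cons (A : gset G) z s :
  tau_tree F A (z :: s) <-> z <> gone G /\ tau_tree F (Aseq A [z]) s.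
Proof. unfold tau_tree. rewrite Forall_cons_iff. tauto. Qed.

Lemma rank_le_tau_tree_cons {A : gset G} {z} :
  z <> gone G -> forall b s,
  rank_le (tau_tree F A) O (z :: s) b <-> rank_le (tau_tree F (Aseq A [z])) O s b.
Proof.
  intros Hz b. induction b as [b IH] using (well_founded_ind (olt_wf O)). intro s.
  rewrite !rank_le_iff. split.
  - intros H y Hy Hsy.
    destruct (H (z :: y) (proj2 (tau_tree_cons A z y) (conj Hz Hy)) (sprefix_cons z Hsy))
      as [c [Hc Hyc]].
    exists c. split; [exact Hc | exact (proj1 (IH c Hc y) Hyc)].
  - intros H y Hy Hsy. destruct (sprefix_cons_inv Hsy) as [y' [-> Hsy']].
    apply tau_tree_cons in Hy as [_ Hy].
    destruct (H y' Hy Hsy') as [c [Hc Hyc]].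
    exists c. split; [exact Hc | exact (proj2 (IH c Hc y') Hyc)].
Qed.

Lemma rank_poset_le_succ_tau_tree (A : gset G) b :
  rank_poset_le_succ (tau_tree F A) O b <->
  (forall z, z <> gone G -> rank_poset_le (tau_tree F (Aseq A [z])) O b).
Proof.
  split.
  - intros H z Hz s Hs.
    assert (Hzs : tau_tree F A (z :: s)) by (apply tau_tree_cons; split; assumption).
    pose proof (H [] (tau_tree_root Hzs)) as Hroot. rewrite rank_le_iff in Hroot.
    destruct (Hroot (z :: s) Hzs (sprefix_nil (z :: s) ltac:(discriminate))) as [c [Hc Hsc]].
    exists c. split; [exact Hc | exact (proj1 (rank_le_tau_tree_cons Hz c s) Hsc)].
  - intro H.
    assert (Hchild : forall z s, tau_tree F A (z :: s) ->
              exists c, olt O c b /\ rank_le (tau_tree F A) O (z :: s) c).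
    { intros z s Hzs. apply tau_tree_cons in Hzs as [Hz Hs].
      destruct (H z Hz s Hs) as [c [Hc Hsc]].
      exists c. split; [exact Hc | exact (proj2 (rank_le_tau_tree_cons Hz c s) Hsc)]. }
    intros [|z s] Hx.
    + apply rank_le_intro. intros [|z s] Hy Hsy; [destruct Hsy as [_ []]; reflexivity|].
      exact (Hchild z s Hy).
    + destruct (Hchild z s Hx) as [c [Hc Hsc]]. exact (rank_le_weaken Hsc Hc).
Qed.

End TauTree.

Section MainInduction.

Context {G : group} {F : family G} {O : wellorder}.
Hypotheses (HFinv : left_invariant F) (HFlow : lower F).

Lemma tau_iter_iff_rank_bound (a : O) (A : gset G) :
  tau_iter F O a A <-> rank_bound (tau_tree F A) O a.
Proof.
  revert A. induction a as [a IH] using (well_founded_ind (olt_wf O)). intro A.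
  destruct (classic (exists b, olt O b a)) as [Hpred | Hzero].
  2: { assert (Ha : forall b, ~ olt O b a) by (intros b Hb; exact (Hzero (ex_intro _ b Hb))).
       rewrite (tau_iter_zero_iff a A Ha),
         (rank_bound_zero (@tau_tree_root _ _ HFlow A) a Ha), tau_tree_nil.
       split; [intros HA HnA; exact (HnA HA) | apply NNPP]. }
  assert (Hchild : forall z : G, tau_below F a (Aseq A [z]) <->
            exists b, olt O b a /\ rank_bound (tau_tree F (Aseq A [z])) O b).
  { intro z. split; intros [b [Hb H]]; exists b; split; try exact Hb; apply (IH b Hb); exact H. }
  rewrite (tau_iter_pos_iff HFinv HFlow a A Hpred).
  destruct (classic (finite_ord O a)) as [Ha | Ha].
  - destruct (finite_ord_max_pred Ha Hpred) as [n [Hna Hmax]].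
    rewrite (rank_bound_finite Ha Hna Hmax), (rank_poset_le_succ_tau_tree HFlow).
    split; intros H z Hz; specialize (H z Hz).
    + exact (proj1 (rank_bound_below_finite Ha Hna Hmax) (proj1 (Hchild z) H)).
    + exact (proj2 (Hchild z) (proj2 (rank_bound_below_finite Ha Hna Hmax) H)).
  - rewrite (rank_bound_infinite a Ha), (rank_poset_le_succ_tau_tree HFlow).
    split; intros H z Hz; specialize (H z Hz).
    + exact (proj1 (rank_bound_below_infinite (@tau_tree_root _ _ HFlow _) a Ha)
                   (proj1 (Hchild z) H)).
    + exact (proj2 (Hchild z)
                   (proj2 (rank_bound_below_infinite (@tau_tree_root _ _ HFlow _) a Ha) H)).
Qed.

End MainInduction.

Theorem theorem3p2 (G : group) (F : family G)
    (HFinv : left_invariant F) (HFlow : lower F)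
    (A : gset G) (O : wellorder) (alpha : O) :
  tau_iter F O alpha A <->
  (wf_poset (tau_tree F A) /\
   (finite_ord O alpha -> rank_poset_le (tau_tree F A) O alpha) /\
   (~ finite_ord O alpha -> rank_poset_le_succ (tau_tree F A) O alpha)).
Proof.
  rewrite (tau_iter_iff_rank_bound HFinv HFlow). split.
  - intros [Hfin Hinf]. split; [|split; assumption].
    apply (wf_poset_of_rank (O := O)).
    exact (rank_bound_has_rank _ (conj Hfin Hinf)).
  - intros [_ H]. exact H.
Qed.
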